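(* Let $n\ge1$, $\lambda>0$, and let $\{e_m\}_{1\le m\le n}\cup\{f_{m,k}\}_{1\le m,k\le n}$ be $n^2+n$ independent exponential random variables with parameter $\lambda$. For $k=1,\ldots,n$ let $\mathcal{T}^k=\max_{1\le m\le n}\,(e_m+f_{m,k})$. Then $$\mathbb{E}\left[\max_{1\le k\le n}\max\{e_k,\mathcal{T}^k\}\right]\le\frac{2H_{n^2+n}}{\lambda},$$ where $H_N=\sum_{j=1}^N\frac1j$ is the $N$-th harmonic number.
   Context: In the paper, $e_k$ is the delay of the supervisor's trigger message to worker $k$ and $\mathcal{T}^k$ is the time at which worker $k$ has received all its ''redirect'' messages, each being a two-message chain (trigger to worker $m$, then redirect from $m$ to $k$); the abstract formulation above records this structure. *)

From HB Require Import structures.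
From mathcomp Require Import all_boot all_order all_algebra.
From mathcomp Require Import all_classical all_reals all_analysis.
Set Implicit Arguments. Unset Strict Implicit. Unset Printing Implicit Defensive.
Import Order.TTheory GRing.Theory Num.Theory.
Local Open Scope classical_set_scope.
Local Open Scope ring_scope.

Definition harmonic_number {R : realType} (N : nat) : R :=
  \sum_(j < N) (j.+1%:R)^-1.

Definition mutually_independent {d} {T : measurableType d} {R : realType}
  (P : probability T R) {I : finType} (X : I -> {RV P >-> R}) : Prop :=
  forall (J : {set I}) (B : I -> set R),
    (forall i, measurable (B i)) ->
    P [set w | forall i, i \in J -> B i (X i w)] =
    \big[*%E/1%E]_(i in J) P (X i @^-1` B i).

Definition exponentially_distributed {d} {T : measurableType d} {R : realType}
  (P : probability T R) (lam : R) (X : {RV P >-> R}) : Prop :=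
  forall A : set R, measurable A -> distribution P X A = exponential_prob lam A.

Definition ef_family {d} {T : measurableType d} {R : realType}
  (P : probability T R) (n : nat)
  (e : 'I_n -> {RV P >-> R}) (f : 'I_n -> 'I_n -> {RV P >-> R})
  : ('I_n + 'I_n * 'I_n)%type -> {RV P >-> R} :=
  fun i => match i with inl m => e m | inr mk => f mk.1 mk.2 end.

Definition Tk {d} {T : measurableType d} {R : realType}
  (P : probability T R) (n : nat)
  (e : 'I_n -> {RV P >-> R}) (f : 'I_n -> 'I_n -> {RV P >-> R})
  (k : 'I_n) (w : T) : \bar R :=
  \big[maxe/-oo%E]_(m < n) (e m w + f m k w)%:E.

Definition completion_time {d} {T : measurableType d} {R : realType}
  (P : probability T R) (n : nat)
  (e : 'I_n -> {RV P >-> R}) (f : 'I_n -> 'I_n -> {RV P >-> R})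
  (w : T) : \bar R :=
  \big[maxe/-oo%E]_(k < n) maxe (e k w)%:E (Tk e f k w).

From HB Require Import structures.
From mathcomp Require Import all_boot all_order all_algebra.
From mathcomp Require Import all_classical all_reals all_analysis.
From mathcomp Require Import measurable_realfun.
From mathcomp.algebra_tactics Require Import ring lra.
Import Order.TTheory GRing.Theory Num.Theory.
Import numFieldNormedType.Exports.
Local Open Scope classical_set_scope.
Local Open Scope ring_scope.

(* Every e_k and every e_m + f_{m,k} is at most twice the maximum M of all
   N = n^2 + n variables, so the completion time is at most 2 M.  By
   independence P(M <= r) >= (1 - e^{-lam r})^N for r >= 0, hence
   E[M] = int_0^oo P(M > r) dr <= int_0^oo 1 - (1 - e^{-lam r})^N dr, and
   expanding 1 - (1 - u)^N = sum_{j<N} u (1 - u)^j makes each term an exact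
   derivative, of (1 - e^{-lam r})^{j+1} / (lam (j+1)), so the integral is
   H_N / lam. *)

Lemma onem_exprn_sum (R : pzRingType) (u : R) (N : nat) :
  1 - (1 - u) ^+ N = \sum_(j < N) u * (1 - u) ^+ j.
Proof. by rewrite -opprB subrX1 -mulNr opprB subKr mulr_sumr. Qed.

Lemma lee_prod (R : realDomainType) (I : Type) (s : seq I) (f g : I -> \bar R) :
  (forall i, 0 <= f i)%E -> (forall i, f i <= g i)%E ->
  (\prod_(i <- s) f i <= \prod_(i <- s) g i)%E.
Proof.
move=> f0 fg; elim: s => [|i s IH]; rewrite ?big_nil ?big_cons//.
by apply: lee_pmul => //; exact: prode_ge0.
Qed.

Lemma ge0r_le_integral {d} {T : measurableType d} {R : realType}
    (mu : {measure set T -> \bar R}) {D : set T} {f g : T -> \bar R} :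
  measurable D -> measurable_fun D f -> measurable_fun D g ->
  (forall x, D x -> 0 <= g x)%E -> (forall x, D x -> f x <= g x)%E ->
  (\int[mu]_(x in D) f x <= \int[mu]_(x in D) g x)%E.
Proof.
move=> mD mf mg g_ge0 fg; rewrite integralE.
apply: (@le_trans _ _ (\int[mu]_(x in D) f^\+ x)%E).
  rewrite -[leRHS]sube0; apply: leeB => //.
  by apply: integral_ge0 => x _; exact: funeneg_ge0.
apply: ge0_le_integral => //; first exact: measurable_funepos.
by move=> x Dx; rewrite funeposE ge_max fg// g_ge0.
Qed.

Lemma measurable_fun_bigmaxe d (T : measurableType d) (R : realType) (I : Type)
    (s : seq I) (F : I -> T -> \bar R) :
  (forall i, measurable_fun setT (F i)) ->
  measurable_fun setT (fun w => \big[maxe/-oo%E]_(i <- s) F i w).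
Proof.
move=> mF; elim: s => [|i s IH].
  by under eq_fun do rewrite big_nil; exact: measurable_cst.
by under eq_fun do rewrite big_cons; exact: measurable_maxe.
Qed.

Section exponential_max_ccdf.
Variables (R : realType) (lam : R).
Hypothesis lam_gt0 : 0 < lam.

Let expNM (x : R) := expR (- lam * x).

Let is_derive_expNM (x : R) : is_derive x 1 expNM (- lam * expNM x).
Proof.
have dlin : is_derive x 1 (fun x : R => - lam * x) (- lam).
  have := is_deriveZ (- lam) (is_derive_id x 1).
  by rewrite /GRing.scale /= mulr1.
by rewrite mulrC; apply: (is_derive1_comp (is_derive_expR _) dlin).
Qed.

Let continuous_expNM : continuous expNM.
Proof.
move=> x; apply: (continuous_comp (g := expR)); last exact: continuous_expR.
by apply: continuousM; [exact: cst_continuous | exact: cvg_id].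
Qed.

Let expNM_cvgy : expNM x @[x --> +oo] --> 0.
Proof.
have -> : expNM = (fun x => expR (- x)) \o *%R lam.
  by apply/funext => x; rewrite /expNM /= mulNr.
exact: cvg_comp (gt0_cvgMry lam_gt0 cvg_id) (@cvgr_expR R).
Qed.

Let integrand j x := expNM x * (1 - expNM x) ^+ j.
Let scaled_onemX j (t : R) := (1 - t) ^+ j.+1 / (lam * j.+1%:R).
Let primitive j := scaled_onemX j \o expNM.

Let continuous_scaled_onemX j : continuous (scaled_onemX j).
Proof.
rewrite /scaled_onemX => t.
apply: (@continuousM _ _ (fun t : R => (1 - t) ^+ j.+1) (cst _)).
  2: exact: cst_continuous.
apply: (@continuous_comp _ _ _ (fun t : R => 1 - t) (fun t : R => t ^+ j.+1)).
  by apply: continuousB; [exact: cst_continuous | exact: cvg_id].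
exact: exprn_continuous.
Qed.

Let continuous_primitive j : continuous (primitive j).
Proof.
move=> x; apply: continuous_comp; first exact: continuous_expNM.
exact: continuous_scaled_onemX.
Qed.

Let integrand_ge0 j x : 0 <= x -> 0 <= integrand j x.
Proof.
move=> x0; rewrite mulr_ge0 ?expR_ge0// exprn_ge0// subr_ge0 expR_le1.
by rewrite mulNr oppr_le0 mulr_ge0// ltW.
Qed.

Let continuous_integrand j : continuous (integrand j).
Proof.
move=> x; apply: continuousM; first exact: continuous_expNM.
apply: (continuous_comp (f := fun x => 1 - expNM x) (g := fun t => t ^+ j)).
  by apply: continuousB; [exact: cst_continuous | exact: continuous_expNM].
exact: exprn_continuous.
Qed.

Let is_derive_primitive j (x : R) : is_derive x 1 (primitive j) (integrand j x).
Proof.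
have donem : is_derive x 1 (fun x => 1 - expNM x) (lam * expNM x).
  have := is_deriveB (is_derive_cst (1 : R) x 1) (is_derive_expNM x).
  by rewrite sub0r mulNr opprK.
have -> : primitive j = (lam * j.+1%:R)^-1 \*: (fun x => 1 - expNM x) ^+ j.+1.
  by apply/funext => y; rewrite /primitive /= exprfctE /GRing.scale /= mulrC.
apply: is_derive_eq (is_deriveZ (lam * j.+1%:R)^-1 (is_deriveX j.+1 donem)) _.
rewrite /GRing.scale /= /integrand; field.
by rewrite (gt_eqF lam_gt0) andbT addrC natr1 pnatr_eq0.
Qed.

Let primitive_cvgy j : primitive j x @[x --> +oo] --> (lam * j.+1%:R)^-1.
Proof.
have -> : (lam * j.+1%:R)^-1 = scaled_onemX j 0.
  by rewrite /scaled_onemX subr0 expr1n mul1r.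
exact: cvg_comp expNM_cvgy (continuous_scaled_onemX j 0).
Qed.

Let integral_integrand j :
  (\int[lebesgue_measure]_(x in `[0%R, +oo[) (integrand j x)%:E =
   ((lam * j.+1%:R)^-1)%:E)%E.
Proof.
rewrite (ge0_continuous_FTC2y _ _ (primitive_cvgy j)).
- rewrite /primitive /scaled_onemX /expNM /=.
  by rewrite mulr0 expR0 subrr expr0n /= mul0r sube0.
- by move=> x; apply: integrand_ge0.
- exact/continuous_subspaceT/continuous_integrand.
- by move=> x _; case: (is_derive_primitive j x).
- exact/cvg_at_right_filter/continuous_primitive.
- by move=> x _; rewrite derive1E; case: (is_derive_primitive j x).
Qed.

Lemma integral_exponential_max_ccdf N :
  (\int[lebesgue_measure]_(x in `[0%R, +oo[)
     (1 - (1 - expR (- lam * x)) ^+ N)%:E = (harmonic_number N / lam)%:E)%E.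
Proof.
under eq_integral do rewrite onem_exprn_sum -sumEFin.
rewrite ge0_integral_sum//; last 2 first.
- move=> j; apply/measurable_EFinP/measurable_funTS.
  exact: continuous_measurable_fun (continuous_integrand j).
- by move=> j x; rewrite /= in_itv /= andbT lee_fin => /integrand_ge0; apply.
under eq_bigr do rewrite integral_integrand.
rewrite sumEFin /harmonic_number mulr_suml.
by congr EFin; apply: eq_bigr => j _; rewrite invfM mulrC.
Qed.

End exponential_max_ccdf.

Lemma exponential_cdf_ge d (T : measurableType d) (R : realType)
    (P : probability T R) (lam : R) (X : {RV P >-> R}) (r : R) :
  exponentially_distributed lam X -> 0 <= r ->
  ((1 - expR (- lam * r))%:E <= cdf X r)%E.
Proof.
move=> expoX; rewrite le_eqVlt => /predU1P[<-|r_gt0].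
  by rewrite mulr0 expR0 subrr measure_ge0.
rewrite EFinB -exponential_prob_itv0c// -expoX; last exact: measurable_itv.
by apply: le_measure; rewrite ?inE//= => x /=; rewrite !in_itv/= => /andP[_ ->].
Qed.

Section maximum_of_random_variables.
Context {d} {T : measurableType d} {R : realType} {P : probability T R}.
Context {I : finType}.
Implicit Types (X : I -> {RV P >-> R}) (r : R).

(* The maximum also includes 0, so that it is nonnegative everywhere, as
   [ge0_expectation_ccdf] requires. *)
Definition max_rv X : {RV P >-> R} :=
  \big[@max_mfun _ T R/(cst 0 : {mfun T >-> R})]_i X i.

Lemma max_rvE X w : max_rv X w = \big[Num.max/0]_i X i w.
Proof. by rewrite /max_rv; elim/big_rec2: _ => // i y1 y2 _ <-. Qed.

Lemma max_rv_ge0 X w : 0 <= max_rv X w.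
Proof. by rewrite max_rvE; exact: bigmax_ge_id. Qed.

Lemma le_max_rv X i w : X i w <= max_rv X w.
Proof. by rewrite max_rvE; exact: le_bigmax. Qed.

Lemma cdf_max_rv X r : mutually_independent X -> 0 <= r ->
  (cdf (max_rv X) r = \prod_i cdf (X i) r)%E.
Proof.
move=> indX r_ge0; rewrite /cdf /distribution /pushforward /=.
have -> : max_rv X @^-1` `]-oo, r] =
    [set w | forall i, i \in [set: I]%SET -> `]-oo, r]%classic (X i w)].
  apply/seteqP; split => w /=; rewrite in_itv/=.
    by move=> Xr i _; rewrite in_itv/= (le_trans (le_max_rv X i w)).
  move=> Xr; rewrite max_rvE; apply: bigmax_le => // i _.
  by move: (Xr i); rewrite inE /= in_itv/=; apply.
have := indX [set: I]%SET (fun=> `]-oo, r]%classic) (fun=> measurable_itv _).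
rewrite /= => ->.
by under eq_bigl do rewrite inE.
Qed.

Lemma ccdf_max_exponential_le X (lam : R) r : 0 <= lam ->
  mutually_independent X -> (forall i, exponentially_distributed lam (X i)) ->
  0 <= r -> (ccdf (max_rv X) r <= (1 - (1 - expR (- lam * r)) ^+ #|I|)%:E)%E.
Proof.
move=> lam_ge0 indX expoX r_ge0.
rewrite ccdf_1_cdf cdf_max_rv// EFinB leeB// -prodr_const -prodEFin.
under eq_bigl do rewrite inE.
apply: lee_prod => [i|i]; last exact: exponential_cdf_ge.
by rewrite lee_fin subr_ge0 expR_le1 mulNr oppr_le0 mulr_ge0.
Qed.

Lemma expectation_max_exponential_le X (lam : R) : 0 < lam ->
  mutually_independent X -> (forall i, exponentially_distributed lam (X i)) ->
  ('E_P[max_rv X] <= (harmonic_number #|I| / lam)%:E)%E.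
Proof.
move=> lam_gt0 indX expoX.
rewrite ge0_expectation_ccdf; last exact: max_rv_ge0.
rewrite -(integral_exponential_max_ccdf _ _ lam_gt0).
apply: ge0_le_integral => //.
- exact: measurable_funTS (ccdf_measurable _).
- apply/measurable_EFinP/measurable_funB => //.
  apply/measurable_funX/measurable_funB => //.
  exact/measurableT_comp/measurable_funM.
- move=> x; rewrite /= in_itv/= andbT => x_ge0.
  exact: ccdf_max_exponential_le (ltW lam_gt0) indX expoX x_ge0.
Qed.

End maximum_of_random_variables.

Section completion_time.
Context {d} {T : measurableType d} {R : realType} {P : probability T R}.
Context {n : nat}.
Variables (e : 'I_n -> {RV P >-> R}) (f : 'I_n -> 'I_n -> {RV P >-> R}).

Lemma measurable_completion_time : measurable_fun setT (completion_time e f).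
Proof.
apply: measurable_fun_bigmaxe => k; apply: measurable_maxe.
  exact/measurable_EFinP/measurable_funPT.
apply: measurable_fun_bigmaxe => m.
by apply/measurable_EFinP/measurable_funD; exact: measurable_funPT.
Qed.

Lemma completion_time_le_max w :
  (completion_time e f w <= (2 * max_rv (ef_family e f) w)%:E)%E.
Proof.
have M_ge0 := max_rv_ge0 (ef_family e f) w.
have le_M := le_max_rv (ef_family e f) ^~ w.
apply: bigmax_le => [|k _]; first exact: leNye.
rewrite ge_max; apply/andP; split.
  by rewrite lee_fin; have := le_M (inl k); rewrite /=; lra.
apply: bigmax_le => [|m _]; first exact: leNye; rewrite lee_fin.
by have := le_M (inl m); have := le_M (inr (m, k)); rewrite /=; lra.
Qed.

End completion_time.

Theorem lemma3 (R : realType) (d : measure_display) (T : measurableType d)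
  (P : probability T R) (n : nat) (lam : R)
  (e : 'I_n -> {RV P >-> R}) (f : 'I_n -> 'I_n -> {RV P >-> R}) :
  (0 < n)%N -> 0 < lam ->
  mutually_independent (ef_family e f) ->
  (forall i, exponentially_distributed lam (ef_family e f i)) ->
  (\int[P]_w completion_time e f w <=
     (2 * harmonic_number (n ^ 2 + n)%N / lam)%:E)%E.
Proof.
move=> _ lam_gt0 indep expo.
set M := max_rv (ef_family e f).
have card_ef : #|{: 'I_n + 'I_n * 'I_n}| = (n ^ 2 + n)%N.
  by rewrite card_sum card_prod card_ord addnC mulnn.
have mM : measurable_fun setT (fun w => (2 * M w)%:E).
  exact/measurable_EFinP/measurable_funM.
have mY := measurable_completion_time e f.
apply: (le_trans (ge0r_le_integral P measurableT mY mM _ _)).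
- by move=> w _; rewrite lee_fin mulr_ge0 ?max_rv_ge0.
- by move=> w _; exact: completion_time_le_max.
under eq_integral do rewrite EFinM.
rewrite ge0_integralZl_EFin//; last 2 first.
- by move=> w _; rewrite lee_fin max_rv_ge0.
- exact/measurable_EFinP.
rewrite -expectation_def -mulrA EFinM -card_ef.
by apply: lee_wpmul2l => //; exact: expectation_max_exponential_le.
Qed.
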